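(* Let $\mathcal A$ be a group (not necessarily finitely generated) and let $\mathcal H$ be a proper subgroup of $\mathcal A$. Then there exists a generating system $X$ of $\mathcal A$ such that $X\cap\mathcal H=\emptyset$ and $|X|=\mathrm{rank}(\mathcal A)$.
   Context: $\mathrm{rank}(\mathcal A)$ is the minimal cardinality of a generating set of $\mathcal A$. *)

From HB Require Import structures.
From mathcomp Require Import all_boot.
From mathcomp Require Import classical_sets cardinality.
Set Implicit Arguments. Unset Strict Implicit. Unset Printing Implicit Defensive.

Local Open Scope classical_set_scope.
Local Open Scope group_scope.

Definition is_subgroup (G : groupType) (H : set G) : Prop :=
  H 1 /\ (forall x y, H x -> H y -> H (x * y)) /\ (forall x, H x -> H x^-1).

Definition gen_subgroup (G : groupType) (X : set G) : set G :=
  [set g | forall K : set G, is_subgroup K -> X `<=` K -> K g].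

Definition generates (G : groupType) (X : set G) : Prop :=
  gen_subgroup X = [set: G].

Definition card_is_rank (G : groupType) (X : set G) : Prop :=
  generates X /\ (forall Y : set G, generates Y -> (X #<= Y)%card).

From mathcomp Require Import all_boot.
From mathcomp Require Import boolp classical_sets functions cardinality.
Set Implicit Arguments.
Unset Strict Implicit.
Unset Printing Implicit Defensive.
Local Open Scope classical_set_scope.

(* Cardinals are well ordered, so some generating set X0 has cardinality
   rank(A).  Since H is proper, X0 has an element y0 outside H.  Replacing
   every y in X0 ∩ H by y y0 gives a set X disjoint from H which still
   generates (y = (y y0) y0^-1), and which is an image of X0, hence of
   cardinality at most rank(A), so exactly rank(A). *)

Section CardinalMinimum.
Variables (T : Type) (P : set (set T)).

(* Cardinal comparison without well-ordering: by Zorn, take a maximal family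
   of choice functions on P that pairwise differ at every member of P.  It is
   onto some member of P, and that member injects into every other one. *)
Definition separating_choices (S : set (set T -> T)) :=
  (forall f, S f -> forall Y, P Y -> Y (f Y)) /\
  (forall Y, P Y -> forall f g, S f -> S g -> f Y = g Y -> f = g).

Definition covered_by (S : set (set T -> T)) (Y0 : set T) :=
  forall y, Y0 y -> exists2 f, S f & f Y0 = y.

Lemma maximal_separating_choices : exists S, separating_choices S /\
  forall S', S `<` S' -> ~ separating_choices S'.
Proof.
apply: Zorn_bigcup => F FP Ftot; split.
  by move=> f [A FA Af] Y PY; exact: (FP A FA).1 f Af Y PY.
move=> Y PY f g [A FA Af] [B FB Bg].
have [AB|BA] := Ftot A B FA FB.
  by apply: (FP B FB).2 => //; exact: AB.
by apply: (FP A FA).2 => //; exact: BA.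
Qed.

Lemma covered_card_le S Y0 : separating_choices S -> P Y0 -> covered_by S Y0 ->
  forall Y, P Y -> (Y0 #<= Y)%card.
Proof.
move=> [Schoice Ssep] PY0 covY0 Y PY.
have [pick pickP] : {pick : T -> (set T -> T) &
    forall y, Y0 y -> S (pick y) /\ pick y Y0 = y}.
  apply: (@choice _ _ (fun y p => Y0 y -> S p /\ p Y0 = y)) => y.
  have [/covY0[f Sf fY0]|] := pselect (Y0 y).
    by exists f.
  by move=> nY0y; exists (fun=> y) => /nY0y.
suff [inj] : $|{injfun Y0 >-> Y}| by exact: inj_card_le inj.
apply/injfunPex; exists (fun y => pick y Y).
  by move=> y /pickP[Spick _]; exact: Schoice _ Spick Y PY.
move=> x y; rewrite !inE => /pickP[Sx xY0] /pickP[Sy yY0] pickY.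
by rewrite -xY0 -yY0 (Ssep Y PY _ _ Sx Sy pickY).
Qed.

Lemma maximal_separating_covers S : P !=set0 -> separating_choices S ->
  (forall S', S `<` S' -> ~ separating_choices S') ->
  exists2 Y0, P Y0 & covered_by S Y0.
Proof.
move=> [Y1 PY1] [Schoice Ssep] Smax; apply: contrapT => no_cover.
have [t _] : exists t, Y1 t.
  apply: contrapT => Y1_empty; apply: no_cover; exists Y1 => // y Y1y.
  by case: Y1_empty; exists y.
have [h hP] : {h : set T -> T & forall Y, P Y ->
    Y (h Y) /\ forall f, S f -> f Y <> h Y}.
  apply: (@choice _ _ (fun Y h => P Y -> Y h /\ forall f, S f -> f Y <> h)) => Y.
  have [PY|] := pselect (P Y); last by exists t.
  apply: contrapT => no_new; apply: no_cover; exists Y => // y Yy.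
  apply: contrapT => y_new; apply: no_new; exists y => _; split=> // f Sf fY.
  by apply: y_new; exists f.
have hS : ~ S h by move=> Sh; exact: (hP Y1 PY1).2 h Sh erefl.
apply: (Smax (S `|` [set h])).
  by split=> [f Sf|/(_ h (or_intror erefl))]; [left|].
split=> [f [Sf|->] Y PY|Y PY f g [Sf|->] [Sg|->] fg //].
- exact: Schoice f Sf Y PY.
- exact: (hP Y PY).1.
- exact: Ssep Y PY f g Sf Sg fg.
- by case: ((hP Y PY).2 f Sf).
- by case: ((hP Y PY).2 g Sg); rewrite fg.
Qed.

Lemma card_minimum_exists : P !=set0 ->
  exists2 Y0, P Y0 & forall Y, P Y -> (Y0 #<= Y)%card.
Proof.
move=> P0; have [S [Ssep Smax]] := maximal_separating_choices.
have [Y0 PY0 covY0] := maximal_separating_covers P0 Ssep Smax.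
by exists Y0 => //; exact: covered_card_le Ssep PY0 covY0.
Qed.

End CardinalMinimum.

Section Generation.
Variable G : groupType.
Local Open Scope group_scope.

Lemma gen_subgroup_min (X K : set G) :
  is_subgroup K -> X `<=` K -> gen_subgroup X `<=` K.
Proof. by move=> subK XK g; apply. Qed.

Lemma gen_subgroup_is_subgroup (X : set G) : is_subgroup (gen_subgroup X).
Proof.
split=> [K [K1 _]//|]; split=> [x y Xx Xy K subK XK|x Xx K subK XK].
  by apply: subK.2.1; [exact: Xx|exact: Xy].
by apply: subK.2.2; exact: Xx.
Qed.

Lemma generates_setT : generates [set: G].
Proof. by apply/seteqP; split=> // g _ K _ /(_ g I). Qed.

Lemma generates_sub_gen (X Y : set G) :
  generates X -> X `<=` gen_subgroup Y -> generates Y.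
Proof.
move=> genX XY; apply/seteqP; split=> // g _.
have : gen_subgroup X g by rewrite genX.
exact: gen_subgroup_min (gen_subgroup_is_subgroup Y) XY g.
Qed.

Lemma generates_not_subset (X H : set G) :
  generates X -> is_subgroup H -> H <> [set: G] -> exists2 x, X x & ~ H x.
Proof.
move=> genX subH HT; apply: contrapT => XH; apply: HT.
apply/seteqP; split=> // g _.
have : gen_subgroup X g by rewrite genX.
apply: gen_subgroup_min subH _ g => x Xx; apply: contrapT => nHx.
by apply: XH; exists x.
Qed.

Section Shift.
Variables (H : set G) (y0 : G).
Hypotheses (subH : is_subgroup H) (nHy0 : ~ H y0).

Definition shift_out (y : G) : G := if pselect (H y) then y * y0 else y.

Lemma shift_out_in y : H y -> shift_out y = y * y0.
Proof. by rewrite /shift_out; case: pselect. Qed.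

Lemma shift_out_id y : ~ H y -> shift_out y = y.
Proof. by rewrite /shift_out; case: pselect. Qed.

Lemma shift_out_notin y : ~ H (shift_out y).
Proof.
rewrite /shift_out; case: pselect => // Hy Hyy0; apply: nHy0.
rewrite -(mulKg y y0); apply: subH.2.1 Hyy0; exact: subH.2.2.
Qed.

Lemma generates_shift_out (X : set G) : generates X -> X y0 ->
  generates (shift_out @` X).
Proof.
move=> genX Xy0; apply: generates_sub_gen genX _ => y Xy.
have subK := gen_subgroup_is_subgroup (shift_out @` X).
have inK x : X x -> gen_subgroup (shift_out @` X) (shift_out x).
  by move=> Xx K _; apply; exists x.
have [Hy|nHy] := pselect (H y); last by rewrite -(shift_out_id nHy); exact: inK.
have := inK y Xy; rewrite (shift_out_in Hy) => Kyy0.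
have := inK y0 Xy0; rewrite (shift_out_id nHy0) => Ky0.
have -> : y = y * y0 * y0^-1 by rewrite mulgK.
by apply: subK.2.1 Kyy0 _; exact: subK.2.2.
Qed.

End Shift.
End Generation.

Theorem lemma6p2 (G : groupType) (H : set G) :
  is_subgroup H -> H <> [set: G] ->
  exists X : set G, generates X /\ X `&` H = set0 /\ card_is_rank X.
Proof.
move=> subH HT.
have [X0 genX0 X0min] := card_minimum_exists (ex_intro _ _ (generates_setT G)).
have [y0 X0y0 nHy0] := generates_not_subset genX0 subH HT.
have genX := generates_shift_out nHy0 genX0 X0y0.
exists (shift_out H y0 @` X0); split=> //; split.
  by apply/seteqP; split=> // _ [[y _ <-]]; exact: shift_out_notin.
split=> // Y genY.
exact: card_le_trans (card_image_le _ X0) (X0min Y genY).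
Qed.
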